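(* Let $k,m$ be positive integers, let $N(\mu_1,I+\Sigma_1),\dots,N(\mu_k,I+\Sigma_k)$ be Gaussians on $\mathbb{R}^d$, and let $P_1,\dots,P_k$ be real polynomials in $X=(X_1,\dots,X_d)$ of degree at most $m$. Let \[f(X,y)=\sum_{j=1}^kP_j(Xy)e^{\mu_j(X)y+\frac12\Sigma_j(X)y^2}=\sum_{r\ge0}\frac{f_r(X)}{r!}y^r.\] Let $\kappa=(m+1)(2^k-1)$. Then there are polynomials $R_{j,l}(X)$ in $d$ variables, for $0\le j\le\kappa$ and $0\le l\le\kappa-j$, such that: (1) $R_{j,l}$ is homogeneous of degree $\kappa-j+l$, and $R_{\kappa,0}=1$; (2) each $R_{j,l}$ is $(A,B)$-simple with respect to $\{\mu_1(X),\Sigma_1(X),\dots,\mu_k(X),\Sigma_k(X)\}$ for some $A,B$ depending only on $k,m$; (3) for all integers $a\ge\kappa$, \[\sum_{j=0}^{\kappa}\sum_{l=0}^{\kappa-j}\frac{f_{a-\kappa+j-l}(X)\,R_{j,l}(X)}{(a-\kappa-l)!}=0,\] where terms with a negative factorial in the denominator are treated as $0$.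
   Context: $\mu(X)=\mu^TX$, $\Sigma(X)=X^T\Sigma X$, and $Xy=(X_1y,\dots,X_dy)$. $f(X,y)$ is regarded as a formal power series in $y$ whose coefficients are polynomials in $X$; the $f_r$ are its primary terms. Given a family $\mathcal{S}$ of polynomials in $X$, a polynomial $Q(X)$ is $(A,B)$-simple with respect to $\mathcal{S}$ if it is a linear combination of at most $A$ terms, all coefficients of magnitude at most $A$, each term a product of at most $B$ polynomials from $\mathcal{S}$. *)

From HB Require Import structures.
From mathcomp Require Import all_boot all_order all_algebra.
From mathcomp Require Import mpoly.
From mathcomp Require Import reals.

Set Implicit Arguments.
Unset Strict Implicit.
Unset Printing Implicit Defensive.

Import Order.TTheory GRing.Theory Num.Theory.
Local Open Scope ring_scope.

Section Defs.
Variables (R : realType) (d : nat).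

Definition muX (mu : 'cV[R]_d) : {mpoly R[d]} :=
  \sum_(i < d) mu i ord0 *: 'X_i.

Definition SigmaX (S : 'M[R]_d) : {mpoly R[d]} :=
  \sum_(i < d) \sum_(j < d) S i j *: ('X_i * 'X_j).

(* Formal power series in y with coefficients in R[X_1..X_d]:
   s r = coefficient of y^r. *)
Definition fps := nat -> {mpoly R[d]}.

Definition fps_mul (s t : fps) : fps :=
  fun r => \sum_(i < r.+1) s i * t (r - i)%N.

Definition fps_one : fps := fun r => if r == 0%N then 1 else 0.

Fixpoint fps_pow (s : fps) (n : nat) : fps :=
  match n with 0%N => fps_one | n'.+1 => fps_mul s (fps_pow s n') end.

(* exp(s) = sum_n s^n / n!, for s with zero constant term (then s^n has
   y-valuation >= n, so only n <= r contributes to the coefficient of y^r). *)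
Definition fps_exp (s : fps) : fps :=
  fun r => \sum_(n < r.+1) (n`!%:R)^-1 *: fps_pow s n r.

(* The polynomial P(Xy) = P(X_1 y,...,X_d y), as a polynomial in y with
   coefficients in R[X], obtained by substituting X_i := X_i * y. *)
Definition subst_Xy (P : {mpoly R[d]}) : {poly {mpoly R[d]}} :=
  mmap (fun c : R => (c%:MP)%:P) (fun i : 'I_d => 'X_i *: 'X) P.

Definition fps_of_poly (p : {poly {mpoly R[d]}}) : fps := fun r => p`_r.

Definition fseries (k : nat) (mu : 'I_k -> 'cV[R]_d) (Sig : 'I_k -> 'M[R]_d)
  (P : 'I_k -> {mpoly R[d]}) : fps :=
  fun r => \sum_(j < k)
    fps_mul (fps_of_poly (subst_Xy (P j)))
      (fps_exp (fun t => if t == 1%N then muX (mu j)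
                         else if t == 2%N then 2^-1 *: SigmaX (Sig j)
                         else 0)) r.

(* f(X,y) = sum_r f_r(X)/r! y^r, so f_r = r! * [y^r] f *)
Definition fcoef k mu Sig P (r : nat) : {mpoly R[d]} :=
  r`!%:R *: @fseries k mu Sig P r.

(* (A,B)-simple w.r.t. the family S: a linear combination of at most A terms,
   all coefficients of magnitude at most A, each term a product of at most B
   polynomials from S (a term is given by a list of indices into S). *)
Definition simple (A B : nat) (S : seq {mpoly R[d]}) (Q : {mpoly R[d]}) :=
  exists terms : seq (R * seq 'I_(size S)),
    [/\ (size terms <= A)%N,
        all (fun t => `|t.1| <= A%:R) terms,
        all (fun t => size t.2 <= B)%N terms &
        Q = \sum_(t <- terms) t.1 *: \prod_(i <- t.2) S`_i].

Definition gauss_family k (mu : 'I_k -> 'cV[R]_d) (Sig : 'I_k -> 'M[R]_d)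
  : seq {mpoly R[d]} :=
  flatten [seq [:: muX (mu j); SigmaX (Sig j)] | j <- enum 'I_k].

End Defs.

From HB Require Import structures.
From mathcomp Require Import all_boot all_order all_algebra.
From mathcomp Require Import mpoly.
From mathcomp Require Import reals.
From mathcomp Require Import ring zify.

Set Implicit Arguments.
Unset Strict Implicit.
Unset Printing Implicit Defensive.
Import Order.TTheory GRing.Theory Num.Theory.
Local Open Scope ring_scope.

(* Write f = sum_i p_i(y) e^(E_i(y)) with E_i = mu_i y + Sigma_i y^2 / 2 and
   p_i = P_i(Xy) of degree at most m in y. A differential operator
   C = sum_(j,l) c_(j,l) y^l D^j kills f as soon as, for every i, it kills p_i
   when D is read as the twisted derivative q |-> q' + E_i' q. Composing C on
   the left with D - E_i' changes its twisted image r for the h-th term into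
   r' + (E_h' - E_i') r: plain differentiation for h = i, and in general an
   operation that raises the y-degree by at most one and preserves 0. So if C
   has order n, composing with (D - E_i')^(m+1+n) kills the i-th term and keeps
   the others killed; doing this for i = 1..k yields an operator of order
   kappa = (m+1)(2^k - 1) with c_(kappa,0) = 1 annihilating f. The coefficient
   of y^(a - kappa) in C f = 0 is the recurrence with R_(j,l) = c_(j,l);
   homogeneity and simplicity of the c_(j,l) are preserved by each composition
   step. *)

Lemma big_ord_widen0 (V : nmodType) n N (F : nat -> V) :
  (n <= N)%N -> (forall i, (n <= i)%N -> F i = 0) ->
  \sum_(i < n) F i = \sum_(i < N) F i.
Proof.
move=> leN F0; rewrite (big_ord_widen _ _ leN) big_mkcond /=.
by apply: eq_bigr => i _; case: ltnP => // /F0.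
Qed.

Section DifferentialOperators.
Variable A : comNzRingType.
Implicit Types (G H q r : {poly A}) (C : {poly {poly A}}).

Definition tderiv G q := q^`() + q * G.

(* C`_j`_l is the coefficient of y^l D^j, and D acts as tderiv G *)
Definition dop_act G C q := \sum_(j < size C) C`_j * iter j (tderiv G) q.

(* (D - G) o C, where D o c = c^`() + c D for a coefficient c *)
Definition dop_lcomp G C := map_poly deriv C + C * 'X - G%:P * C.

Lemma dop_act_widen G C q N : (size C <= N)%N ->
  dop_act G C q = \sum_(j < N) C`_j * iter j (tderiv G) q.
Proof.
move=> leCN; apply: (big_ord_widen0 (F := fun j => C`_j * _)) => // j.
by move/(nth_default 0) ->; rewrite mul0r.
Qed.

Lemma dop_act1 G q : dop_act G 1 q = q.
Proof. by rewrite /dop_act size_poly1 big_ord1 coefC mul1r. Qed.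

Lemma dop_actD G C1 C2 q :
  dop_act G (C1 + C2) q = dop_act G C1 q + dop_act G C2 q.
Proof.
pose N := maxn (size C1) (size C2).
rewrite !(@dop_act_widen _ _ _ N) ?leq_maxl ?leq_maxr ?size_polyD // -big_split.
by apply: eq_bigr => j _; rewrite coefD mulrDl.
Qed.

Lemma dop_actN G C q : dop_act G (- C) q = - dop_act G C q.
Proof.
rewrite /dop_act size_polyN -sumrN.
by apply: eq_bigr => j _; rewrite coefN mulNr.
Qed.

Lemma dop_actCM G a C q : dop_act G (a%:P * C) q = a * dop_act G C q.
Proof.
rewrite (@dop_act_widen _ _ _ (size C)) ?mulr_sumr; last first.
  by rewrite mul_polyC size_scale_leq.
by apply: eq_bigr => j _; rewrite coefCM mulrA.
Qed.

Lemma dop_actMX G C q : dop_act G (C * 'X) q = dop_act G C (tderiv G q).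
Proof.
rewrite (@dop_act_widen _ _ _ (size C).+1); last first.
  by rewrite (leq_trans (size_polyMleq _ _)) // size_polyX addn2.
rewrite big_ord_recl coefMX mul0r add0r.
by apply: eq_bigr => j _; rewrite coefMX -iterSr.
Qed.

Lemma tderivM G a q : tderiv G (a * q) = a^`() * q + a * tderiv G q.
Proof. by rewrite /tderiv derivM mulrDr mulrA addrA. Qed.

Lemma tderiv_sum G (I : Type) (s : seq I) (F : I -> {poly A}) :
  tderiv G (\sum_(i <- s) F i) = \sum_(i <- s) tderiv G (F i).
Proof. by rewrite /tderiv raddf_sum mulr_suml -big_split. Qed.

Lemma tderiv_dop_act G C q : tderiv G (dop_act G C q) =
  dop_act G (map_poly deriv C) q + dop_act G C (tderiv G q).
Proof.
rewrite -dop_actMX (@dop_act_widen _ (map_poly _ _) _ (size C)); last first.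
  apply/leq_sizeP => j leCj.
  by rewrite coef_map_id0 ?deriv0 // nth_default // deriv0.
rewrite (@dop_act_widen _ (C * 'X) _ (size C).+1); last first.
  by rewrite (leq_trans (size_polyMleq _ _)) // size_polyX addn2.
rewrite tderiv_sum big_ord_recl coefMX mul0r add0r -big_split /=.
apply: eq_bigr => j _; rewrite coef_map_id0 ?deriv0 // coefMX /bump add1n add0n.
by rewrite tderivM.
Qed.

Lemma dop_act_lcomp G' G C q : dop_act G' (dop_lcomp G C) q =
  (dop_act G' C q)^`() + (G' - G) * dop_act G' C q.
Proof.
rewrite /dop_lcomp dop_actD dop_actN dop_actD dop_actCM dop_actMX.
rewrite -tderiv_dop_act /tderiv; ring.
Qed.

Lemma dop_act_iter_lcomp G C q t :
  dop_act G (iter t (dop_lcomp G) C) q = (dop_act G C q)^`(t).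
Proof.
elim: t => [|t IHt]; first by rewrite derivn0.
by rewrite iterS dop_act_lcomp IHt subrr mul0r addr0 derivnS.
Qed.

Lemma dop_act_iter_lcomp_eq0 G' G C q t : dop_act G' C q = 0 ->
  dop_act G' (iter t (dop_lcomp G) C) q = 0.
Proof.
move=> Cq0; elim: t => [|t IHt] //.
by rewrite iterS dop_act_lcomp IHt deriv0 mulr0 addr0.
Qed.

Lemma size_deriv_addM H r : (size H <= 2)%N ->
  (size (r^`() + H * r)%R <= (size r).+1)%N.
Proof.
move=> sH; rewrite (leq_trans (size_polyD _ _)) // geq_max; apply/andP; split.
  apply/leq_sizeP => i /ltnW/leqW leri.
  by rewrite coef_deriv nth_default ?mul0rn.
by rewrite (leq_trans (size_polyMleq _ _)) //; lia.
Qed.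

Lemma size_dop_act_iter_lcomp G' G C q t : (size (G' - G)%R <= 2)%N ->
  (size (dop_act G' (iter t (dop_lcomp G) C) q) <= size (dop_act G' C q) + t)%N.
Proof.
move=> sG; elim: t => [|t IHt]; first by rewrite addn0.
rewrite iterS dop_act_lcomp addnS.
exact: leq_trans (size_deriv_addM _ sG) _.
Qed.

End DifferentialOperators.

Section Annihilator.
Variables (A : comNzRingType) (m : nat).
Implicit Types (g : A * A) (gs : seq (A * A)).
Implicit Types (p : {poly A}) (C : {poly {poly A}}).

(* the logarithmic derivative mu + Sigma y of exp (mu y + Sigma y^2 / 2) *)
Definition gauss_logderiv g : {poly A} := g.1%:P + g.2%:P * 'X.

Definition annihilator_order n := (m.+1 * (2 ^ n - 1))%N.

Fixpoint annihilator gs : {poly {poly A}} :=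
  if gs is g :: gs' then
    iter (m.+1 + annihilator_order (size gs'))
      (dop_lcomp (gauss_logderiv g)) (annihilator gs')
  else 1.

Lemma annihilator_cons g gs : annihilator (g :: gs) =
  iter (m.+1 + annihilator_order (size gs)) (dop_lcomp (gauss_logderiv g))
    (annihilator gs).
Proof. by []. Qed.

Lemma annihilator_order0 : annihilator_order 0 = 0%N.
Proof. by rewrite /annihilator_order muln0. Qed.

Lemma annihilator_orderS n : annihilator_order n.+1 =
  (annihilator_order n + (m.+1 + annihilator_order n))%N.
Proof.
rewrite /annihilator_order expnS.
have := expn_gt0 2 n; case: (2 ^ n)%N => // e _; nia.
Qed.

Lemma size_gauss_logderivB g g' :
  (size (gauss_logderiv g' - gauss_logderiv g)%R <= 2)%N.
Proof.
have sG h : (size (gauss_logderiv h) <= 2)%N.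
  rewrite (leq_trans (size_polyD _ _)) // geq_max size_polyC.
  rewrite mul_polyC (leq_trans (size_scale_leq _ _)) ?size_polyX //.
  by case: (h.1 != 0).
by rewrite (leq_trans (size_polyD _ _)) // size_polyN geq_max !sG.
Qed.

Lemma size_dop_act_annihilator g gs p :
  (size (dop_act (gauss_logderiv g) (annihilator gs) p) <=
     size p + annihilator_order (size gs))%N.
Proof.
elim: gs => [|g' gs IH]; first by rewrite dop_act1 annihilator_order0 addn0.
rewrite annihilator_cons.
apply: leq_trans (size_dop_act_iter_lcomp _ _ _ (size_gauss_logderivB _ _)) _.
by rewrite (annihilator_orderS (size gs)); lia.
Qed.

Lemma dop_act_annihilator g gs p : g \in gs -> (size p <= m.+1)%N ->
  dop_act (gauss_logderiv g) (annihilator gs) p = 0.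
Proof.
elim: gs => // g' gs IH.
rewrite inE annihilator_cons => /orP[/eqP-> | g_gs] sp.
  rewrite dop_act_iter_lcomp derivn_poly0 //.
  by apply: leq_trans (size_dop_act_annihilator _ _ _) _; rewrite leq_add2r.
by apply: dop_act_iter_lcomp_eq0; apply: IH.
Qed.

Lemma annihilator_ind (Q : {poly {poly A}} -> nat -> Prop) gs :
  Q 1 0%N ->
  (forall g C n, g \in gs -> Q C n ->
     Q (dop_lcomp (gauss_logderiv g) C) n.+1) ->
  Q (annihilator gs) (annihilator_order (size gs)).
Proof.
elim: gs => [|g gs IH] Q1 QS; first by rewrite annihilator_order0.
rewrite annihilator_cons (annihilator_orderS (size gs)).
elim: (m.+1 + _)%N => [|t IHt].
  rewrite addn0; apply: IH => // g' C n g'_gs; apply: QS.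
  by rewrite inE g'_gs orbT.
by rewrite addnS; apply: QS (mem_head _ _) IHt.
Qed.

Lemma coef_dop_lcomp g C j l : (dop_lcomp (gauss_logderiv g) C)`_j`_l =
  C`_j`_l.+1 *+ l.+1 + (if j is j'.+1 then C`_j'`_l else 0)
  - (g.1 * C`_j`_l + (if l is l'.+1 then g.2 * C`_j`_l' else 0)).
Proof.
have -> : (dop_lcomp (gauss_logderiv g) C)`_j =
    (C`_j)^`() + (if j is j'.+1 then C`_j' else 0) - gauss_logderiv g * C`_j.
  rewrite /dop_lcomp coefB coefD coef_map_id0 ?deriv0 // coefMX coefCM.
  by case: j.
rewrite coefB coefD coef_deriv mulrDl coefD coefCM -mulrA coefCM coefXM.
by case: j => [|j]; case: l => [|l]; rewrite ?coef0 ?mulr0.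
Qed.

Definition dop_degree_le C n := forall j l, (n < j + l)%N -> C`_j`_l = 0.

Lemma size_dop_degree_le C n : dop_degree_le C n -> (size C <= n.+1)%N.
Proof.
move=> Cn; apply/leq_sizeP => j ltnj; apply/polyP => l.
by rewrite coef0 Cn //; lia.
Qed.

Lemma dop_degree_le_lcomp g C n : dop_degree_le C n ->
  dop_degree_le (dop_lcomp (gauss_logderiv g) C) n.+1.
Proof.
move=> Cn j l ltnjl; rewrite coef_dop_lcomp !Cn ?mul0rn ?mulr0 ?add0r; try lia.
by case: j ltnjl => [|j] ltnjl; case: l ltnjl => [|l] ltnjl;
  rewrite ?Cn ?mulr0 ?addr0 ?subrr //; lia.
Qed.

Lemma coef_dop_lcomp_lead g C n : dop_degree_le C n -> C`_n`_0 = 1 ->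
  (dop_lcomp (gauss_logderiv g) C)`_n.+1`_0 = 1.
Proof.
move=> Cn Cn0; rewrite coef_dop_lcomp Cn0 !Cn; try lia.
by rewrite mul0rn mulr0 add0r addr0 subr0.
Qed.

Lemma dop_degree_le1 : dop_degree_le 1 0.
Proof.
move=> j l; rewrite coefC.
by case: j => [|j] //= lt0l; rewrite ?coef0 // coefC gtn_eqF.
Qed.

Lemma annihilator_degree_le gs :
  dop_degree_le (annihilator gs) (annihilator_order (size gs)).
Proof.
apply: (annihilator_ind (Q := dop_degree_le)) => [|g C n _].
  exact: dop_degree_le1.
exact: dop_degree_le_lcomp.
Qed.

Lemma coef_annihilator_lead gs :
  (annihilator gs)`_(annihilator_order (size gs))`_0 = 1.
Proof.
pose Q C n := dop_degree_le C n /\ C`_n`_0 = 1.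
suff [] : Q (annihilator gs) (annihilator_order (size gs)) by [].
apply: annihilator_ind => [|g C n _ [Cn Cn0]].
  by split; [exact: dop_degree_le1 | rewrite !coefC].
by split; [exact: dop_degree_le_lcomp | exact: coef_dop_lcomp_lead].
Qed.

End Annihilator.

Section AnnihilatorCoefficients.
Variables (R : realType) (d m : nat).
Local Notation M := {mpoly R[d]}.
Implicit Types (g : M * M) (gs : seq (M * M)) (C : {poly {poly M}}).

(* With weight 1 for X and D and weight -1 for y, C has weight n. *)
Definition dop_homog C n :=
  forall j l, (j + l <= n)%N -> C`_j`_l \is (n - j + l)%N.-homog.

Lemma dop_homog1 : dop_homog 1 0.
Proof.
move=> j l; rewrite leqn0 addn_eq0 => /andP[/eqP-> /eqP->].
by rewrite !coefC dhomog1.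
Qed.

Lemma dop_homog_lcomp g C n : g.1 \is 1.-homog -> g.2 \is 2.-homog ->
  dop_degree_le C n -> dop_homog C n ->
  dop_homog (dop_lcomp (gauss_logderiv g) C) n.+1.
Proof.
move=> g1 g2 Cn Chom j l lejl; rewrite coef_dop_lcomp.
apply: rpredB; apply: rpredD.
- have [lejl1|ltnjl1] := leqP (j + l.+1) n; last by rewrite Cn ?mul0rn ?rpred0.
  by rewrite (_ : n.+1 - j + l = n - j + l.+1)%N ?rpredMn ?Chom //; lia.
- case: j lejl => [|j] lejl; first exact: rpred0.
  by rewrite (_ : n.+1 - j.+1 + l = n - j + l)%N ?Chom //; lia.
- have [lejln|ltnjl] := leqP (j + l) n; last by rewrite Cn ?mulr0 ?rpred0.
  by rewrite (_ : n.+1 - j + l = 1 + (n - j + l))%N ?dhomogM ?Chom //; lia.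
- case: l lejl => [|l] lejl; first exact: rpred0.
  by rewrite (_ : n.+1 - j + l.+1 = 2 + (n - j + l))%N ?dhomogM ?Chom //; lia.
Qed.

Lemma annihilator_homog gs :
  (forall g, g \in gs -> g.1 \is 1.-homog /\ g.2 \is 2.-homog) ->
  dop_homog (annihilator m gs) (annihilator_order m (size gs)).
Proof.
move=> gs_hom; pose Q C n := dop_degree_le C n /\ dop_homog C n.
suff [] : Q (annihilator m gs) (annihilator_order m (size gs)) by [].
apply: annihilator_ind => [|g C n /gs_hom[g1 g2] [Cn Chom]].
  by split; [exact: dop_degree_le1 | exact: dop_homog1].
by split; [exact: dop_degree_le_lcomp | exact: dop_homog_lcomp].
Qed.

Section Simple.
Variable S : seq M.
Implicit Types (Q : M) (a b : nat).

Lemma simple0 a b : simple a b S 0.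
Proof. by exists [::]; split => //; rewrite big_nil. Qed.

Lemma simple1 a b : (0 < a)%N -> simple a b S 1.
Proof.
move=> a_gt0; exists [:: (1, [::])].
split; rewrite //= ?normr1 ?ler1n ?andbT //.
by rewrite big_seq1 big_nil scale1r.
Qed.

Lemma simpleW a b a' b' Q : (a <= a')%N -> (b <= b')%N ->
  simple a b S Q -> simple a' b' S Q.
Proof.
move=> le_a le_b [ts [sts ts_a ts_b ->]]; exists ts; split => //.
- exact: leq_trans le_a.
- by apply/allP => t /(allP ts_a) /le_trans; apply; rewrite ler_nat.
- by apply/allP => t /(allP ts_b) /leq_trans; apply.
Qed.

Lemma simpleD a1 a2 b Q1 Q2 : simple a1 b S Q1 -> simple a2 b S Q2 ->
  simple (a1 + a2) b S (Q1 + Q2).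
Proof.
move=> [t1 [s1 t1a t1b ->]] [t2 [s2 t2a t2b ->]].
exists (t1 ++ t2).
split; rewrite ?size_cat ?leq_add ?all_cat ?t1b ?t2b ?big_cat //.
apply/andP; split.
  by apply/allP => t /(allP t1a) /le_trans; apply; rewrite ler_nat leq_addr.
by apply/allP => t /(allP t2a) /le_trans; apply; rewrite ler_nat leq_addl.
Qed.

Lemma simpleN a b Q : simple a b S Q -> simple a b S (- Q).
Proof.
move=> [ts [sts ts_a ts_b ->]]; exists [seq (- t.1, t.2) | t <- ts].
split; rewrite ?size_map ?all_map //.
  by apply/allP => t /(allP ts_a) /=; rewrite normrN.
by rewrite big_map -sumrN; apply: eq_bigr => t _; rewrite scaleNr.
Qed.

Lemma simpleMn a b Q n : simple a b S Q -> simple (a * n.+1) b S (Q *+ n.+1).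
Proof.
move=> [ts [sts ts_a ts_b ->]]; exists [seq (t.1 *+ n.+1, t.2) | t <- ts].
split; rewrite ?size_map ?all_map //.
- by rewrite (leq_trans sts) // leq_pmulr.
- apply/allP => t /(allP ts_a) /= ta.
  by rewrite normrMn natrM -[X in X <= _]mulr_natr ler_pM2r ?ltr0n.
- by rewrite big_map -sumrMnl; apply: eq_bigr => t _; rewrite scalerMnl.
Qed.

Lemma simpleMl a b x Q : x \in S -> simple a b S Q -> simple a b.+1 S (x * Q).
Proof.
move=> xS [ts [sts ts_a ts_b ->]].
have xS' : (index x S < size S)%N by rewrite index_mem.
pose i : 'I_(size S) := Ordinal xS'.
exists [seq (t.1, i :: t.2) | t <- ts]; split; rewrite ?size_map ?all_map //.
rewrite big_map mulr_sumr; apply: eq_bigr => t _.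
by rewrite big_cons nth_index // scalerAr.
Qed.

Lemma simple_lcomp g C n a b : g.1 \in S -> g.2 \in S -> dop_degree_le C n ->
  (forall j l, simple a b S C`_j`_l) ->
  forall j l, simple (a * n.+3) b.+1 S (dop_lcomp (gauss_logderiv g) C)`_j`_l.
Proof.
move=> g1S g2S Cn Csimple j l; rewrite coef_dop_lcomp.
apply: (@simpleW (a * n + a + (a + a)) b.+1); rewrite ?mulnS //; first lia.
apply: simpleD; last apply: simpleN; apply: simpleD.
- have [le_l1n|ltnl1] := leqP l.+1 n; last first.
    by rewrite Cn ?mul0rn; [exact: simple0 | lia].
  apply: simpleW (simpleMn _ (Csimple _ _)) => //.
  by rewrite leq_mul2l le_l1n orbT.
- by case: j => [|j]; [exact: simple0 | apply: simpleW (Csimple _ _)].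
- exact: simpleMl.
- by case: l => [|l]; [exact: simple0 | exact: simpleMl].
Qed.

(* the bound (n + 2)! absorbs the factor n + 3 of each composition step *)
Lemma annihilator_simple gs :
  (forall g, g \in gs -> g.1 \in S /\ g.2 \in S) ->
  let n := annihilator_order m (size gs) in
  forall j l, simple n.+2`! n S (annihilator m gs)`_j`_l.
Proof.
move=> gsS; pose Q C n := dop_degree_le C n /\
  forall j l, simple n.+2`! n S C`_j`_l.
suff [] : Q (annihilator m gs) (annihilator_order m (size gs)) by [].
apply: annihilator_ind => [|g C n /gsS[g1S g2S] [Cn Csimple]].
  split=> [|j l]; first exact: dop_degree_le1.
  rewrite coefC; case: (j == 0%N); last by rewrite coef0; exact: simple0.
  by rewrite coefC; case: (l == 0%N); [exact: simple1 | exact: simple0].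
split; first exact: dop_degree_le_lcomp.
by rewrite factS mulnC; exact: simple_lcomp.
Qed.

End Simple.
End AnnihilatorCoefficients.

Section ExponentialSeries.
Variables (R : realType) (d : nat).
Local Notation M := {mpoly R[d]}.
Variables (S : {poly M}) (s : fps R d).
Hypotheses (sE : s =1 fps_of_poly S) (S0 : S`_0 = 0).
Implicit Types (p q : {poly M}) (C : {poly {poly M}}).

Lemma fps_pow_poly n r : fps_pow s n r = (S ^+ n)`_r.
Proof.
elim: n r => [|n IHn] r /=; first by rewrite /fps_one expr0 coefC.
by rewrite /fps_mul exprS coefM; apply: eq_bigr => i _; rewrite sE IHn.
Qed.

Lemma coef_expr_lt n r : (r < n)%N -> (S ^+ n)`_r = 0.
Proof.
have -> : S = drop_poly 1 S * 'X.
  rewrite -[LHS](poly_take_drop 1) expr1 [take_poly 1 S](_ : _ = 0) ?add0r //.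
  by apply/polyP => -[|i]; rewrite coef_take_poly coef0.
by rewrite exprMn coefMXn => ->.
Qed.

Definition exp_trunc N : {poly M} :=
  \sum_(n < N) ((n`!%:R)^-1 : R)%:MP *: S ^+ n.

Lemma fps_exp_poly N r : (r < N)%N -> fps_exp s r = (exp_trunc N)`_r.
Proof.
move=> ltrN; rewrite /fps_exp /exp_trunc coef_sum.
rewrite (big_ord_widen0 (F := fun n => (n`!%:R)^-1 *: fps_pow s n r) ltrN).
  by apply: eq_bigr => n _; rewrite coefZ mul_mpolyC fps_pow_poly.
by move=> n ltrn; rewrite fps_pow_poly coef_expr_lt ?scaler0.
Qed.

Lemma invfact_mulS n : ((n.+1`!%:R)^-1 : R) *+ n.+1 = (n`!%:R)^-1.
Proof.
rewrite factS natrM -mulr_natr; field.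
by rewrite -mulrS !pnatr_eq0 -lt0n fact_gt0.
Qed.

Lemma deriv_exp_trunc N : (exp_trunc N.+1)^`() = S^`() * exp_trunc N.
Proof.
rewrite /exp_trunc raddf_sum big_ord_recl /= derivZ expr0 -polyC1 derivC.
rewrite scaler0 add0r mulr_sumr; apply: eq_bigr => n _.
rewrite derivZ deriv_exp /bump /= add1n add0n -scalerMnr scalerMnl -mpolyCMn.
by rewrite invfact_mulS scalerAr.
Qed.

Definition mulexp q : fps R d := fps_mul (fps_of_poly q) (fps_exp s).

Lemma mulexp_trunc q t N : (t < N)%N -> mulexp q t = (q * exp_trunc N)`_t.
Proof.
move=> ltN; rewrite /mulexp /fps_mul coefM; apply: eq_bigr => i _.
by rewrite (fps_exp_poly (N := N)) // (leq_ltn_trans (leq_subr _ _)).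
Qed.

Lemma mulexp0 t : mulexp 0 t = 0.
Proof.
by rewrite /mulexp /fps_mul big1 // => i _; rewrite /fps_of_poly coef0 mul0r.
Qed.

Lemma mulexp_sum (I : Type) (r : seq I) (F : I -> {poly M}) t :
  mulexp (\sum_(i <- r) F i) t = \sum_(i <- r) mulexp (F i) t.
Proof.
rewrite (@mulexp_trunc _ t t.+1) // mulr_suml coef_sum.
by apply: eq_bigr => i _; rewrite -mulexp_trunc.
Qed.

Lemma mulexp_mul p q t :
  mulexp (p * q) t = \sum_(l < t.+1) p`_l * mulexp q (t - l)%N.
Proof.
rewrite (@mulexp_trunc _ t t.+1) // -mulrA coefM; apply: eq_bigr => l _.
by rewrite -mulexp_trunc // ltnS leq_subr.
Qed.

Lemma mulexp_tderiv q t : mulexp (tderiv S^`() q) t = mulexp q t.+1 *+ t.+1.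
Proof.
rewrite (@mulexp_trunc q t.+1 t.+2) // -coef_deriv derivM deriv_exp_trunc.
rewrite /tderiv mulrA !(@mulexp_trunc _ t t.+1) // mulrDl !coefD.
by rewrite -!(@mulexp_trunc _ t) //.
Qed.

Lemma mulexp_iter_tderiv q j t :
  mulexp (iter j (tderiv S^`()) q) t = mulexp q (t + j)%N *+ (t + j)^_j.
Proof.
elim: j q t => [|j IHj] q t; first by rewrite addn0 ffactn0.
by rewrite iterSr IHj mulexp_tderiv -mulrnA addnS ffactSS.
Qed.

Lemma mulexp_dop_act C n q t : dop_degree_le C n ->
  mulexp (dop_act S^`() C q) t =
  \sum_(j < n.+1) \sum_(l < (n - j).+1)
     (if (l <= t)%N then C`_j`_l * mulexp q (t - l + j)%N *+ (t - l + j)^_j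
      else 0).
Proof.
move=> Cn; rewrite (dop_act_widen _ _ (size_dop_degree_le Cn)) mulexp_sum.
apply: eq_bigr => j _; rewrite mulexp_mul.
pose F l := if (l <= t)%N
  then C`_j`_l * mulexp q (t - l + j)%N *+ (t - l + j)^_j else 0.
have F_t l : (t < l)%N -> F l = 0 by move=> lttl; rewrite /F leqNgt lttl.
have F_nj l : (n - j < l)%N -> F l = 0.
  move=> ltl; rewrite /F Cn ?mul0r ?mul0rn ?if_same //.
  by have := ltn_ord j; lia.
have [le_t le_nj] : (t.+1 <= (t + n).+1)%N /\ ((n - j).+1 <= (t + n).+1)%N.
  by split; lia.
rewrite [RHS](big_ord_widen0 le_nj F_nj) -(big_ord_widen0 le_t F_t).
by apply: eq_bigr => l _; rewrite /F -ltnS ltn_ord mulexp_iter_tderiv mulrnAr.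
Qed.

End ExponentialSeries.

Section GaussianData.
Variables (R : realType) (d : nat).
Local Notation M := {mpoly R[d]}.

Lemma muX_homog (v : 'cV[R]_d) : muX v \is 1.-homog.
Proof. by apply: rpred_sum => i _; rewrite rpredZ // dhomogX /= mdeg1. Qed.

Lemma SigmaX_homog (Sg : 'M[R]_d) : SigmaX Sg \is 2.-homog.
Proof.
apply: rpred_sum => i _; apply: rpred_sum => j _; apply: rpredZ.
by apply: (@dhomogM _ _ _ 1 _ 1); rewrite dhomogX /= mdeg1.
Qed.

Lemma mem_gauss_family k (mu : 'I_k -> 'cV[R]_d) (Sig : 'I_k -> 'M[R]_d) i :
  muX (mu i) \in gauss_family mu Sig /\ SigmaX (Sig i) \in gauss_family mu Sig.
Proof.
by split; apply/flatten_mapP; exists i; rewrite ?mem_enum ?inE ?eqxx ?orbT.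
Qed.

Lemma mmap1_subst_Xy (mm : 'X_{1..d}) :
  mmap1 (fun i : 'I_d => 'X_i *: ('X : {poly M})) mm =
  (\prod_(i < d) ('X_i : M) ^+ (mm i))%:P * 'X^(mdeg mm).
Proof.
rewrite /mmap1 mdegE -prodrXr rmorph_prod -big_split /=.
by apply: eq_bigr => i _; rewrite -mul_polyC exprMn rmorphXn.
Qed.

Lemma size_subst_Xy (P : M) n :
  (msize P <= n)%N -> (size (subst_Xy P) <= n)%N.
Proof.
move=> sP; apply/leq_sizeP => j le_nj.
rewrite /subst_Xy /mmap coef_sum big1_seq // => mm /= /msize_mdeg_lt lt_mm.
by rewrite mmap1_subst_Xy !coefCM coefXn gtn_eqF ?mulr0 //; lia.
Qed.

Definition gauss_exponent (g : M * M) : {poly M} :=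
  g.1%:P * 'X + (2^-1 *: g.2)%:P * 'X^2.

Lemma coef_gauss_exponent g t : (gauss_exponent g)`_t =
  if t == 1%N then g.1 else if t == 2%N then 2^-1 *: g.2 else 0.
Proof.
rewrite coefD coefCM coefX coefCM coefXn.
by case: t => [|[|[|t]]] /=; rewrite ?mulr0 ?mulr1 ?addr0 ?add0r.
Qed.

Lemma deriv_gauss_exponent g : (gauss_exponent g)^`() = gauss_logderiv g.
Proof.
rewrite derivD !deriv_mulC derivX derivXn mulr1 /= expr1 mulrnAr -mulrnAl.
rewrite -polyCMn scalerMnl.
have -> : (2^-1 *+ 2 : R) = 1 by rewrite -[_ *+ 2]mulr_natr mulVf // pnatr_eq0.
by rewrite scale1r.
Qed.

Lemma scale_fact_ffact (V : lmodType R) (x : V) n j :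
  ((n`!%:R : R)^-1) *: ((n + j)`!%:R *: x) = x *+ (n + j)^_j.
Proof.
rewrite scalerA -(ffact_fact (leq_addl n j)) addnK natrM mulrCA mulVf ?mulr1.
  by rewrite scaler_nat.
by rewrite pnatr_eq0 -lt0n fact_gt0.
Qed.

Lemma fcoef_recurrence k (mu : 'I_k -> 'cV[R]_d) (Sig : 'I_k -> 'M[R]_d)
    (P : 'I_k -> M) C n t :
  dop_degree_le C n ->
  (forall i, dop_act (gauss_logderiv (muX (mu i), SigmaX (Sig i))) C
               (subst_Xy (P i)) = 0) ->
  \sum_(j < n.+1) \sum_(l < (n - j).+1)
    (if (l <= t)%N
     then ((t - l)`!%:R)^-1 *: (fcoef mu Sig P (t - l + j) * C`_j`_l)
     else 0) = 0.
Proof.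
move=> Cn C_kills.
pose s i : fps R d := fun r => if r == 1%N then muX (mu i)
  else if r == 2%N then 2^-1 *: SigmaX (Sig i) else 0.
pose E i := gauss_exponent (muX (mu i), SigmaX (Sig i)).
have sE i : s i =1 fps_of_poly (E i).
  by move=> r; rewrite /fps_of_poly coef_gauss_exponent.
have E0 i : (E i)`_0 = 0 by rewrite coef_gauss_exponent.
(* fseries is by definition \sum_i mulexp (s i) (subst_Xy (P i)) *)
have fcoefE j l : (if (l <= t)%N
    then ((t - l)`!%:R)^-1 *: (fcoef mu Sig P (t - l + j) * C`_j`_l) else 0) =
  \sum_(i < k) (if (l <= t)%N
    then C`_j`_l * mulexp (s i) (subst_Xy (P i)) (t - l + j)%N
           *+ (t - l + j)^_j
    else 0).
  case: leqP => _; last by rewrite big1.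
  rewrite -scalerAl scale_fact_ffact mulrC mulr_sumr -sumrMnl.
  by apply: eq_bigr.
under eq_bigr => j _ do under eq_bigr => l _ do rewrite fcoefE.
rewrite (eq_bigr _ (fun j _ => exchange_big _ _ _ _ _ _)) exchange_big /=.
apply: big1 => i _.
rewrite -(mulexp_dop_act (sE i) (E0 i) _ _ Cn) deriv_gauss_exponent.
by rewrite C_kills mulexp0.
Qed.

End GaussianData.

Unset Implicit Arguments.

Theorem lemma5p4 (k m : nat) (hk : (0 < k)%N) (hm : (0 < m)%N) :
  exists A B : nat,
  forall (d : nat) (R : realType) (mu : 'I_k -> 'cV[R]_d) (Sig : 'I_k -> 'M[R]_d)
         (P : 'I_k -> {mpoly R[d]}),
    (* N(mu_j, I + Sigma_j) is a Gaussian: covariance symmetric PSD *)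
    (forall j, (Sig j)^T = Sig j) ->
    (forall j (v : 'cV[R]_d), 0 <= (v^T *m (1%:M + Sig j) *m v) ord0 ord0) ->
    (forall j, (msize (P j) <= m.+1)%N) ->
    let kappa := (m.+1 * (2 ^ k - 1))%N in
    exists Rp : nat -> nat -> {mpoly R[d]},
      [/\ (forall j l, (j <= kappa)%N -> (l <= kappa - j)%N ->
             Rp j l \is (kappa - j + l)%N.-homog),
          Rp kappa 0%N = 1,
          (forall j l, (j <= kappa)%N -> (l <= kappa - j)%N ->
             simple A B (gauss_family mu Sig) (Rp j l)) &
          (forall a : nat, (kappa <= a)%N ->
             \sum_(j < kappa.+1) \sum_(l < (kappa - j).+1)
               (if (l <= a - kappa)%N
                then ((a - kappa - l)`!%:R)^-1 *:
                       (fcoef mu Sig P (a - kappa - l + j) * Rp j l)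
                else 0) = 0)].
Proof.
exists (m.+1 * (2 ^ k - 1)).+2`!, (m.+1 * (2 ^ k - 1))%N.
move=> d R mu Sig P _ _ sizeP kappa; rewrite {}/kappa.
pose gs := [seq (muX (mu i), SigmaX (Sig i)) | i <- enum 'I_k].
have -> : (m.+1 * (2 ^ k - 1))%N = annihilator_order m (size gs).
  by rewrite size_map size_enum_ord.
exists (fun j l => (annihilator m gs)`_j`_l); split.
- move=> j l le_j le_l; apply: annihilator_homog; last lia.
  by move=> _ /mapP[i _ ->]; split; [exact: muX_homog | exact: SigmaX_homog].
- exact: coef_annihilator_lead.
- move=> j l _ _; apply: annihilator_simple => _ /mapP[i _ ->].
  exact: mem_gauss_family.
- move=> a _; apply: fcoef_recurrence (@annihilator_degree_le _ m gs) _ => i.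
  by rewrite dop_act_annihilator ?size_subst_Xy // map_f ?mem_enum.
Qed.
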